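(* Let $H$ be a real Hilbert space, $m\ge1$ an integer, and let $g_m(\alpha,H)$ denote either $\gamma_m(\alpha,H)$ (for the Pure Greedy Algorithm) or $\gamma^o_m(\alpha,H)$ (for the Orthogonal Greedy Algorithm). Suppose that for some $\beta\in(0,1]$, some $C>0$ and some $\varphi(m)>0$ we have $g_m(\beta,H)\le C\varphi(m)^{-\beta/2}$. Then for every $\alpha\in(0,\beta)$, $$ g_m(\alpha,H)\le C^{\alpha/\beta}\varphi(m)^{-\alpha/2}.$$
   Context: A (symmetric) dictionary in $H$ is a set $\mathcal D$ of unit vectors with dense span and $g\in\mathcal D\Rightarrow -g\in\mathcal D$. $A_1(\mathcal D)$ is the closed convex hull of $\mathcal D$ and $\|f\|_{A_1(\mathcal D)}:=\inf\{M:f/M\in A_1(\mathcal D)\}$. For $f\in H$, $g(f)\in\mathcal D$ denotes an element maximizing $\langle f,g\rangle$ over $g\in\mathcal D$ (assumed to exist). PGA: $f_0:=f$, $G_0:=0$, $G_m(f,\mathcal D):=G_{m-1}(f,\mathcal D)+\langle f_{m-1},g(f_{m-1})\rangle g(f_{m-1})$, $f_m:=f-G_m(f,\mathcal D)$. OGA: $f^o_0:=f$, $G^o_m(f,\mathcal D)$ is the orthogonal projection of $f$ onto $\operatorname{span}\{g(f^o_0),\dots,g(f^o_{m-1})\}$, $f^o_m:=f-G^o_m(f,\mathcal D)$. For $\alpha\in(0,1]$, $\gamma_m(\alpha,H):=\sup \frac{\|f-G_m(f,\mathcal D)\|}{\|f\|^{1-\alpha}\|f\|^{\alpha}_{A_1(\mathcal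 D)}}$, the supremum over all dictionaries $\mathcal D$, all $f\neq0$ with $\|f\|_{A_1(\mathcal D)}<\infty$ and all possible realizations of $G_m(f,\mathcal D)$; $\gamma^o_m(\alpha,H)$ is defined the same way with $G^o_m$ in place of $G_m$. *)

From HB Require Import structures.
From mathcomp Require Import all_boot all_order all_algebra.
From mathcomp Require Import all_classical all_reals all_analysis.
Set Implicit Arguments. Unset Strict Implicit. Unset Printing Implicit Defensive.
Import Order.TTheory GRing.Theory Num.Theory.
Import numFieldNormedType.Exports.
Local Open Scope classical_set_scope.
Local Open Scope ring_scope.

(* A real Hilbert space: a complete normed space over the reals whose norm
   comes from a (symmetric, bilinear) inner product. *)
Record inner_product (R : realType) (H : completeNormedModType R) := InnerProduct {
  ip :> H -> H -> R;
  ip_sym : forall x y, ip x y = ip y x;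
  ip_linl : forall (a : R) x y z, ip (a *: x + y) z = a * ip x z + ip y z;
  ip_norm : forall x, ip x x = `|x| ^+ 2 }.

Section Greedy.
Context {R : realType} {H : completeNormedModType R} (ip : inner_product H).

Definition lspan (D : set H) : set H :=
  [set x | exists n (c : 'I_n -> R) (v : 'I_n -> H),
     (forall i, D (v i)) /\ x = \sum_(i < n) c i *: v i].

Definition dictionary (D : set H) : Prop :=
  (forall g, D g -> `|g| = 1) /\
  closure (lspan D) = setT /\
  (forall g, D g -> D (- g)).

Definition conv_hull (D : set H) : set H :=
  [set x | exists n (w : 'I_n -> R) (v : 'I_n -> H),
     (forall i, 0 <= w i) /\ \sum_(i < n) w i = 1 /\
     (forall i, D (v i)) /\ x = \sum_(i < n) w i *: v i].

Definition A1 (D : set H) : set H := closure (conv_hull D).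

Definition A1norm (D : set H) (f : H) : \bar R :=
  ereal_inf [set M%:E | M in [set M : R | 0 < M /\ A1 D (M^-1 *: f)]].

Definition greedy_choice (D : set H) (r g : H) : Prop :=
  D g /\ forall g', D g' -> ip r g' <= ip r g.

Fixpoint pga_G (f : H) (gs : nat -> H) (k : nat) : H :=
  match k with
  | 0 => 0
  | k'.+1 => pga_G f gs k' + ip (f - pga_G f gs k') (gs k') *: gs k'
  end.

Definition pga_realization (D : set H) (f : H) (m : nat) (gs : nat -> H) : Prop :=
  forall k, (k < m)%N -> greedy_choice D (f - pga_G f gs k) (gs k).

Definition fspan (gs : nat -> H) (k : nat) : set H :=
  [set x | exists c : 'I_k -> R, x = \sum_(i < k) c i *: gs i].

Definition is_orth_proj (S : set H) (f p : H) : Prop :=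
  S p /\ forall s, S s -> ip (f - p) s = 0.

Definition oga_realization (D : set H) (f : H) (m : nat) (gs Gs : nat -> H) : Prop :=
  (forall k, (k <= m)%N -> is_orth_proj (fspan gs k) f (Gs k)) /\
  (forall k, (k < m)%N -> greedy_choice D (f - Gs k) (gs k)).

Definition ratio (D : set H) (alpha : R) (f Gm : H) : R :=
  `|f - Gm| / (`|f| `^ (1 - alpha) * (fine (A1norm D f)) `^ alpha).

Definition admissible (D : set H) (f : H) : Prop :=
  dictionary D /\ f != 0 /\ (A1norm D f < +oo)%E.

Definition gamma_pga (m : nat) (alpha : R) : \bar R :=
  ereal_sup [set r | exists (D : set H) (f : H) (gs : nat -> H),
     admissible D f /\ pga_realization D f m gs /\
     r = (ratio D alpha f (pga_G f gs m))%:E].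

Definition gamma_oga (m : nat) (alpha : R) : \bar R :=
  ereal_sup [set r | exists (D : set H) (f : H) (gs Gs : nat -> H),
     admissible D f /\ oga_realization D f m gs Gs /\
     r = (ratio D alpha f (Gs m))%:E].

End Greedy.

From Pilot Require Import Defs.
From HB Require Import structures.
From mathcomp Require Import all_boot all_order all_algebra.
From mathcomp Require Import all_classical all_reals all_analysis.
From mathcomp Require Import ring lra.
Import Order.TTheory GRing.Theory Num.Theory.
Import numFieldNormedType.Exports.
Local Open Scope ring_scope.

(* Fix a realization with residual x = |f - G_m| and write n = |f|,
   A = |f|_{A_1(D)} and s = alpha / beta in [0, 1].  Both algorithms only
   ever subtract from the residual a vector orthogonal to what remains, so
   x <= n.  The alpha-denominator interpolates the beta-denominator:
   n^(1-alpha) A^alpha = n^(1-s) (n^(1-beta) A^beta)^s.  Hence if the beta-ratio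
   is at most K, then x = x^(1-s) x^s <= n^(1-s) (K n^(1-beta) A^beta)^s, i.e.
   the alpha-ratio is at most K^s; with K = C phi(m)^(-beta/2) this is
   C^(alpha/beta) phi(m)^(-alpha/2). *)

Lemma ler_powR_geomean (R : realType) (x y z s : R) :
  0 <= x -> x <= y -> x <= z -> 0 <= s <= 1 -> x <= y `^ (1 - s) * z `^ s.
Proof.
move=> x0 xy xz /andP[s0 s1].
have {1}-> : x = x `^ (1 - s) * x `^ s by rewrite -powRD ?subrK ?powRr1 ?oner_eq0.
have y0 : 0 <= y := le_trans x0 xy; have z0 : 0 <= z := le_trans x0 xz.
by apply: ler_pM; rewrite ?powR_ge0 // ge0_ler_powR // ?subr_ge0 ?nnegrE.
Qed.

Section Ratio.
Context {R : realType} {H : completeNormedModType R}.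

Lemma A1norm_ge0 (D : set H) (f : H) : 0 <= fine (A1norm D f).
Proof.
apply: fine_ge0; apply: le_ereal_inf_tmp => _ [M [M0 _] <-].
by rewrite lee_fin ltW.
Qed.

Lemma ratio_ge0 (D : set H) (alpha : R) (f G : H) : 0 <= Defs.ratio D alpha f G.
Proof. by rewrite divr_ge0 // mulr_ge0 // powR_ge0. Qed.

Lemma ratio_le_powR {D : set H} {f G : H} {alpha beta K : R} :
  f != 0 -> `|f - G| <= `|f| -> 0 < alpha < beta ->
  Defs.ratio D beta f G <= K -> Defs.ratio D alpha f G <= K `^ (alpha / beta).
Proof.
move=> f0 Gf /andP[a0 ab] hK; rewrite /Defs.ratio.
set x := `|f - G|; set n := `|f|; set A := fine (A1norm D f); set s := alpha / beta.
have n0 : 0 < n by rewrite normr_gt0.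
have b0 : 0 < beta := lt_trans a0 ab.
have [A0|Ap] := eqVneq A 0.
  by rewrite A0 powR0 ?gt_eqF // mulr0 invr0 mulr0 powR_ge0.
have A0 : 0 < A by rewrite lt_def Ap A1norm_ge0.
set Db := n `^ (1 - beta) * A `^ beta.
have Db0 : 0 < Db by rewrite mulr_gt0 // powR_gt0.
have K0 : 0 <= K := le_trans (ratio_ge0 D beta f G) hK.
have xK : x <= K * Db by rewrite -ler_pdivrMr.
have Da : n `^ (1 - alpha) * A `^ alpha = n `^ (1 - s) * Db `^ s.
  rewrite /Db powRM ?powR_ge0 // -!powRrM mulrA -powRD ?(gt_eqF n0) ?implybT //.
  by congr (n `^ _ * A `^ _); rewrite /s; field; rewrite gt_eqF.
have s01 : 0 <= s <= 1.
  by rewrite /s divr_ge0 ?(ltW a0) ?(ltW b0) //= ler_pdivrMr // mul1r ltW.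
rewrite Da ler_pdivrMr ?mulr_gt0 ?powR_gt0 // mulrCA -powRM ?(ltW Db0) //.
exact: ler_powR_geomean (normr_ge0 _) _ xK s01.
Qed.

End Ratio.

Section InnerProduct.
Context {R : realType} {H : completeNormedModType R} (ip : inner_product H).

Lemma ip0l z : ip 0 z = 0.
Proof. have := ip_linl ip 1 0 0 z; rewrite scaler0 addr0 mul1r => h; lra. Qed.

Lemma ipDl x y z : ip (x + y) z = ip x z + ip y z.
Proof. by have := ip_linl ip 1 x y z; rewrite scale1r mul1r. Qed.

Lemma ipZl a x z : ip (a *: x) z = a * ip x z.
Proof. by have := ip_linl ip a x 0 z; rewrite addr0 ip0l addr0. Qed.

Lemma ipBl x y z : ip (x - y) z = ip x z - ip y z.
Proof. by rewrite ipDl -scaleN1r ipZl mulN1r. Qed.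

Lemma ipDr x y z : ip z (x + y) = ip z x + ip z y.
Proof. by rewrite ip_sym ipDl !(ip_sym ip z). Qed.

Lemma ipZr a x z : ip z (a *: x) = a * ip z x.
Proof. by rewrite ip_sym ipZl (ip_sym ip z). Qed.

Lemma pythagoras x y : ip x y = 0 -> `|x + y| ^+ 2 = `|x| ^+ 2 + `|y| ^+ 2.
Proof. by move=> xy; rewrite -!(ip_norm ip) ipDl !ipDr (ip_sym ip y x) xy; ring. Qed.

Lemma norm_orth_residual_le r p : ip (r - p) p = 0 -> `|r - p| <= `|r|.
Proof.
move=> /pythagoras; rewrite subrK => hr.
by rewrite -ler_sqr ?nnegrE // hr lerDl sqr_ge0.
Qed.

Lemma pga_residual_le {D : set H} {f : H} {m : nat} {gs : nat -> H} :
  dictionary D -> pga_realization ip D f m gs ->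
  forall k, (k <= m)%N -> `|f - pga_G ip f gs k| <= `|f|.
Proof.
move=> [Dunit _] hgs; elim=> [|k IH] km /=; first by rewrite subr0.
apply: le_trans (IH (ltnW km)); have [Dg _] := hgs k km.
have g1 : ip (gs k) (gs k) = 1 by rewrite (ip_norm ip) Dunit // expr1n.
rewrite opprD addrA; apply: norm_orth_residual_le.
by rewrite ipZr ipBl ipZl g1 mulr1 subrr mulr0.
Qed.

Lemma oga_residual_le {D : set H} {f : H} {m : nat} {gs Gs : nat -> H} :
  oga_realization ip D f m gs Gs -> `|f - Gs m| <= `|f|.
Proof.
move=> [hproj _]; have [span_Gs orth] := hproj m (leqnn m).
exact: norm_orth_residual_le (orth _ span_Gs).
Qed.

Lemma gamma_pga_le_powR (m : nat) (alpha beta K : R) :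
  0 < alpha < beta -> (gamma_pga ip m beta <= K%:E)%E ->
  (gamma_pga ip m alpha <= (K `^ (alpha / beta))%:E)%E.
Proof.
move=> ab hK; apply/ereal_supP => _ [D [f [gs [hA [hgs ->]]]]].
have [hD [f0 _]] := hA.
have hbeta : Defs.ratio D beta f (pga_G ip f gs m) <= K.
  by rewrite -lee_fin; apply: le_trans hK; apply: ereal_sup_ubound; exists D, f, gs.
by rewrite lee_fin (ratio_le_powR f0 (pga_residual_le hD hgs _ (leqnn m)) ab hbeta).
Qed.

Lemma gamma_oga_le_powR (m : nat) (alpha beta K : R) :
  0 < alpha < beta -> (gamma_oga ip m beta <= K%:E)%E ->
  (gamma_oga ip m alpha <= (K `^ (alpha / beta))%:E)%E.
Proof.
move=> ab hK; apply/ereal_supP => _ [D [f [gs [Gs [hA [hgs ->]]]]]].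
have [_ [f0 _]] := hA.
have hbeta : Defs.ratio D beta f (Gs m) <= K.
  by rewrite -lee_fin; apply: le_trans hK; apply: ereal_sup_ubound; exists D, f, gs, Gs.
by rewrite lee_fin (ratio_le_powR f0 (oga_residual_le hgs) ab hbeta).
Qed.

End InnerProduct.

Theorem lemma2p2 (R : realType) (H : completeNormedModType R)
  (ip : inner_product H) (m : nat) (beta C : R) (phi : nat -> R) :
  (1 <= m)%N -> 0 < beta <= 1 -> 0 < C -> 0 < phi m ->
  ((gamma_pga ip m beta <= (C * phi m `^ (- (beta / 2)))%:E)%E ->
     forall alpha : R, 0 < alpha < beta ->
     (gamma_pga ip m alpha <= (C `^ (alpha / beta) * phi m `^ (- (alpha / 2)))%:E)%E)
  /\
  ((gamma_oga ip m beta <= (C * phi m `^ (- (beta / 2)))%:E)%E ->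
     forall alpha : R, 0 < alpha < beta ->
     (gamma_oga ip m alpha <= (C `^ (alpha / beta) * phi m `^ (- (alpha / 2)))%:E)%E).
Proof.
move=> _ /andP[b0 _] C0 phi0.
have KE alpha : C `^ (alpha / beta) * phi m `^ (- (alpha / 2)) =
                (C * phi m `^ (- (beta / 2))) `^ (alpha / beta).
  rewrite powRM ?powR_ge0 ?ltW // -powRrM; congr (_ * phi m `^ _).
  by field; rewrite gt_eqF.
by split=> hb alpha ab; rewrite KE; [apply: gamma_pga_le_powR | apply: gamma_oga_le_powR].
Qed.
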